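(* Let $S$ be a finite $p$-group of nilpotency class two, let $T\trianglelefteq S$ with $T=T_1\times\cdots\times T_n$, where the $T_i$ are pairwise isomorphic groups of nilpotency class two. Suppose $s\in S\setminus T$ permutes the set $\{T_1,\dots,T_n\}$ by conjugation. Then $s$ normalizes each $T_i$. *)

From mathcomp Require Export all_boot all_fingroup all_solvable.
Set Implicit Arguments.
Unset Strict Implicit.
Unset Printing Implicit Defensive.


Set Implicit Arguments.
Unset Strict Implicit.
Unset Printing Implicit Defensive.
Import GroupScope.
Local Open Scope group_scope.

(* If s moved T_i to a different factor T_j, then for x in T_i we would have
   x^-1 = [x, s] (x^s)^-1, a product of a central element of S (class two)
   and an element of T_j, which centralizes T_i; so T_i would be abelian,
   contradicting its class two. *)

Section DirectFactors.

Variables (gT : finGroupType) (I : finType) (P : pred I) (F : I -> {group gT}).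
Variable G : {group gT}.
Hypothesis defG : \big[dprod/1]_(i | P i) F i = G.

Lemma bigdprod_cents i j : P i -> P j -> i != j -> F i \subset 'C(F j).
Proof.
have /bigcprodYP cFF : \big[cprod/1]_(i | P i) F i == (\prod_(i | P i) F i)%G.
  by rewrite (bigdprodWcp defG) bigprodGE (bigdprodWY defG).
exact: cFF.
Qed.

Lemma bigdprod_subG i : P i -> F i \subset G.
Proof.
move=> Pi; rewrite -(bigdprodWY defG).
by apply: subset_trans (subset_gen _); rewrite (bigcup_max i).
Qed.

End DirectFactors.

Lemma abelian_conjg_cents (gT : finGroupType) (S H : {group gT}) s :
  S^`(1) \subset 'Z(S) -> H \subset S -> s \in S ->
  H :^ s \subset 'C(H) -> abelian H.
Proof.
move=> sS'Z sHS Ss cHsH; apply/centsP => x Hx y Hy.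
have /setIP[_ /centP cSxs] : [~ x, s] \in 'Z(S).
  by apply: (subsetP sS'Z); apply: mem_commg => //; apply: (subsetP sHS).
have cy_xs : commute y [~ x, s] by apply/commute_sym/cSxs/(subsetP sHS).
have /centP cxJs_H : x ^ s \in 'C(H) by apply: (subsetP cHsH); rewrite memJ_conjg.
have cy_xJs : commute y (x ^ s) by apply/commute_sym/cxJs_H.
have cy_xV : commute y x^-1.
  by rewrite -[x^-1](mulgK (x ^ s)); apply: commuteM => //; apply: commuteV.
by apply: commute_sym; rewrite -[x]invgK; apply: commuteV.
Qed.

Theorem mainTheorem3 (gT : finGroupType) (p : nat) (S T : {group gT})
    (n : nat) (Ti : 'I_n -> {group gT}) (s : gT) :
  prime p -> p.-group S -> nil_class S = 2 ->
  T <| S ->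
  \big[dprod/1]_(i < n) Ti i = T ->
  (forall i j, Ti i \isog Ti j) ->
  (forall i, nil_class (Ti i) = 2) ->
  s \in S :\: T ->
  [set (Ti i :^ s) | i : 'I_n] = [set (Ti i : {set gT}) | i : 'I_n] ->
  forall i, s \in 'N(Ti i).
Proof.
move=> _ _ clS /andP[sTS _] defT _ clTi /setDP[Ss _] permTi i.
have : Ti i :^ s \in [set Ti i :^ s | i : 'I_n] by apply: imset_f.
rewrite permTi => /imsetP[j _ defTij].
have [eq_ij | neq_ij] := eqVneq i j; first by apply/normP; rewrite defTij eq_ij.
have nabTi : ~~ abelian (Ti i) by rewrite -nil_class1 clTi.
case/negP: nabTi; apply: (@abelian_conjg_cents _ S _ s) => //.
- by rewrite -nil_class2 clS.
- by apply: subset_trans sTS; apply: (bigdprod_subG defT).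
- by rewrite defTij; apply: (bigdprod_cents defT); rewrite // eq_sym.
Qed.
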